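(* Let $\mathbf{P}=(X,P)$ be a finite interval order with no duplicated holdings, and let $\mathbf{I}$ be a distinguishing interval representation of $\mathbf{P}$, assigning to each $x\in X$ the interval $[l_x,r_x]$. Then for every linear extension $L$ of $P$ there exists a choice function $f$ on $\mathbf{I}$ such that $L(f)=L$.
   Context: An interval representation of a poset $(X,P)$ assigns to each $x\in X$ a closed real interval $[l_x,r_x]$ (lengths may be $0$) such that $x<y$ in $P$ iff $r_x<l_y$; $(X,P)$ is an interval order if it has one. $\mathbf{P}$ has no duplicated holdings if no two distinct elements can be assigned the same interval. A representation is distinguishing if no two intervals share an endpoint (every real number occurs at most once as an endpoint). A linear extension of $P$ is a linear order $L$ on $X$ with $P\subseteq L$. A choice function on the representation $\mathbf{I}$ is an injection $f:X\to\mathbb{R}$ with $l_x\le f(x)\le r_x$ for all $x$; $L(f)$ is the linear order on $X$ with $x<y$ in $L(f)$ iff $f(x)<f(y)$. *)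

From mathcomp Require Import all_boot.
From Stdlib Require Import Reals.
Open Scope R_scope.

Definition strict_poset {X : Type} (P : X -> X -> Prop) : Prop :=
  (forall x, ~ P x x) /\ (forall x y z, P x y -> P y z -> P x z).

Definition interval_rep {X : Type} (P : X -> X -> Prop) (l r : X -> R) : Prop :=
  (forall x, l x <= r x) /\ (forall x y, P x y <-> r x < l y).

Definition is_interval_order {X : Type} (P : X -> X -> Prop) : Prop :=
  strict_poset P /\ exists l r : X -> R, interval_rep P l r.

Definition no_dup_holdings {X : Type} (P : X -> X -> Prop) : Prop :=
  forall x y, x <> y ->
    ~ ((forall z, P z x <-> P z y) /\ (forall z, P x z <-> P y z)).

Definition distinguishing {X : Type} (l r : X -> R) : Prop :=
  (forall x y, x <> y -> l x <> l y) /\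
  (forall x y, x <> y -> r x <> r y) /\
  (forall x y, l x <> r y).

Definition linear_extension {X : Type} (P L : X -> X -> Prop) : Prop :=
  strict_poset L /\
  (forall x y, x <> y -> L x y \/ L y x) /\
  (forall x y, P x y -> L x y).

Definition choice_function {X : Type} (l r f : X -> R) : Prop :=
  (forall x y, f x = f y -> x = y) /\ (forall x, l x <= f x <= r x).

Definition induced_order_eq {X : Type} (f : X -> R) (L : X -> X -> Prop) : Prop :=
  forall x y, L x y <-> f x < f y.

(* Let lmax x be the largest left endpoint among x and its L-predecessors.
   Every such l y lies strictly below r x: otherwise r x < l y, i.e. x < y in
   P, contradicting y <L x (and l y = r x is excluded because the
   representation is distinguishing).  So lmax is L-monotone with
   l x <= lmax x < r x, and adding a small enough multiple of the L-rank of x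
   makes it strictly L-increasing while keeping it inside [l x, r x]. *)
From mathcomp Require Import all_boot.
From Stdlib Require Import Reals Lra RList ClassicalEpsilon.

Definition holds (p : Prop) : bool :=
  if excluded_middle_informative p then true else false.

Lemma holdsP (p : Prop) : reflect p (holds p).
Proof. by rewrite /holds; case: excluded_middle_informative => h; constructor. Qed.

Lemma In_map_mem (T : eqType) (U : Type) (f : T -> U) (s : seq T) x :
  x \in s -> List.In (f x) (map f s).
Proof. by elim: s => //= y s IH; rewrite inE => /orP [/eqP-> | /IH]; [left | right]. Qed.

Lemma In_mapP (T : eqType) (U : Type) (f : T -> U) (s : seq T) v :
  List.In v (map f s) -> exists2 x, x \in s & v = f x.
Proof.
elim: s => //= y s IH [<- | /IH [x xs ->]]; first by exists y; rewrite ?inE ?eqxx.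
by exists x; rewrite // inE xs orbT.
Qed.

Lemma MaxRlist_map_ge (T : eqType) (f : T -> R) (s : seq T) x :
  x \in s -> f x <= MaxRlist (map f s).
Proof. by move=> xs; apply/MaxRlist_P1/In_map_mem. Qed.

Lemma MaxRlist_map_attained (T : eqType) (f : T -> R) (s : seq T) x0 :
  x0 \in s -> exists2 x, x \in s & MaxRlist (map f s) = f x.
Proof. by move=> x0s; apply/In_mapP/MaxRlist_P2; exists (f x0); apply: In_map_mem. Qed.

Section ChoiceAlongOrder.

Variables (X : finType) (L : rel X) (l r : X -> R).

Hypothesis L_irr : irreflexive L.
Hypothesis L_trans : transitive L.
Hypothesis l_lt_r_pred : forall x y, (y == x) || L y x -> l y < r x.

Definition lmax (x : X) : R :=
  MaxRlist [seq l y | y <- enum X & (y == x) || L y x].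

Lemma mem_lmax_range x y :
  (y == x) || L y x -> y \in [seq y <- enum X | (y == x) || L y x].
Proof. by move=> yx; rewrite mem_filter yx mem_enum. Qed.

Lemma l_le_lmax x : l x <= lmax x.
Proof. by apply: MaxRlist_map_ge; apply: mem_lmax_range; rewrite eqxx. Qed.

Lemma lmax_attained x : exists2 y, (y == x) || L y x & lmax x = l y.
Proof.
have [|y] := MaxRlist_map_attained _ l _ _ (@mem_lmax_range x x _); first by rewrite eqxx.
by rewrite mem_filter => /andP [yx _]; exists y.
Qed.

Lemma lmax_lt_r x : lmax x < r x.
Proof. by have [y yx ->] := lmax_attained x; apply: l_lt_r_pred. Qed.

Lemma lmax_homo x y : L x y -> lmax x <= lmax y.
Proof.
move=> Lxy; have [z zx ->] := lmax_attained x.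
apply: MaxRlist_map_ge; apply: mem_lmax_range.
case/orP: zx => [/eqP-> | Lzx]; first by rewrite Lxy orbT.
by apply/orP; right; apply: L_trans Lzx Lxy.
Qed.

Definition rank (x : X) : nat := #|[pred y | L y x]|.

Lemma rank_homo x y : L x y -> (rank x < rank y)%nat.
Proof.
move=> Lxy; apply/proper_card/properP; split.
  by apply/subsetP => z; rewrite !inE => Lzx; apply: L_trans Lzx Lxy.
by exists x; rewrite !inE ?Lxy ?L_irr.
Qed.

(* The least gap r x - lmax x (a junk value 0 when X is empty). *)
Definition slack : R := - MaxRlist [seq lmax x - r x | x <- enum X].

Lemma slack_le x : slack <= r x - lmax x.
Proof.
have := @MaxRlist_map_ge _ (fun x => lmax x - r x) (enum X) x (mem_enum X x).
by rewrite /slack /=; lra.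
Qed.

Lemma slack_gt0 (x0 : X) : 0 < slack.
Proof.
have [x _] :=
  @MaxRlist_map_attained _ (fun x => lmax x - r x) (enum X) x0 (mem_enum X x0).
by rewrite /slack => ->; have := lmax_lt_r x; lra.
Qed.

Definition step : R := slack / (INR #|X| + 1).

Definition choice (x : X) : R := lmax x + step * INR (rank x).

Lemma step_gt0 (x0 : X) : 0 < step.
Proof. by apply: Rdiv_lt_0_compat; [apply: slack_gt0 x0 | have := pos_INR #|X|; lra]. Qed.

Lemma choice_homo x y : L x y -> choice x < choice y.
Proof.
move=> Lxy; have := lmax_homo _ _ Lxy; have := step_gt0 x.
have : INR (rank x) < INR (rank y) by apply/lt_INR/ltP/rank_homo.
rewrite /choice; nra.
Qed.

Lemma choice_within x : l x <= choice x <= r x.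
Proof.
have := step_gt0 x; have := l_le_lmax x; have := slack_le x; have := pos_INR (rank x).
have : INR (rank x) <= INR #|X| by apply/le_INR/leP/max_card.
have : step * (INR #|X| + 1) = slack.
  by rewrite /step; field; have := pos_INR #|X|; lra.
rewrite /choice; nra.
Qed.

End ChoiceAlongOrder.

Lemma linear_extension_l_lt_r {X : Type} {P L : X -> X -> Prop} {l r : X -> R} :
  interval_rep P l r -> distinguishing l r -> linear_extension P L ->
  forall x y, y = x \/ L y x -> l y < r x.
Proof.
move=> [_ Prep] [_ [_ l_neq_r]] [[L_irr L_trans] [_ PL]] x y yx.
suff : ~ r x < l y by have := l_neq_r y x; lra.
move=> /Prep /PL Lxy; case: yx Lxy => [-> /L_irr // | Lyx Lxy].
exact: L_irr (L_trans _ _ _ Lxy Lyx).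
Qed.

Section TotalHomo.

Variables (X : finType) (L : X -> X -> Prop) (f : X -> R).

Hypothesis L_total : forall x y, x <> y -> L x y \/ L y x.
Hypothesis f_homo : forall x y, L x y -> f x < f y.

Lemma total_homo_inj x y : f x = f y -> x = y.
Proof. by case: (eqVneq x y) => // /eqP/L_total [] /f_homo; lra. Qed.

Lemma total_homo_induced_order : induced_order_eq f L.
Proof.
move=> x y; split; first exact: f_homo.
by case: (eqVneq x y) => [-> | /eqP/L_total [] // /f_homo]; lra.
Qed.

End TotalHomo.

Theorem theorem4p3 (X : finType) (P : X -> X -> Prop) (l r : X -> R) :
  is_interval_order P ->
  no_dup_holdings P ->
  interval_rep P l r ->
  distinguishing l r ->
  forall L : X -> X -> Prop, linear_extension P L ->
  exists f : X -> R, choice_function l r f /\ induced_order_eq f L.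
Proof.
move=> _ _ rep dist L ext; have [[L_irr L_trans] [L_total _]] := ext.
pose Lb x y := holds (L x y).
have Lb_irr : irreflexive Lb by move=> x; apply/holdsP/L_irr.
have Lb_trans : transitive Lb.
  by move=> y x z /holdsP Lxy /holdsP Lyz; apply/holdsP; apply: L_trans Lxy Lyz.
have l_lt_r : forall x y, (y == x) || Lb y x -> l y < r x.
  move=> x y yx; apply: (linear_extension_l_lt_r rep dist ext).
  by case/orP: yx => [/eqP | /holdsP]; [left | right].
have homo x y : L x y -> choice X Lb l r x < choice X Lb l r y.
  by move/holdsP; apply: choice_homo.
exists (choice X Lb l r); split; [split|].
- exact: total_homo_inj L_total homo.
- by move=> x; apply: choice_within.
- exact: total_homo_induced_order L_total homo.
Qed.
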